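(* Let $\tau,\kappa,\nu:\mathbb{Z}^3\to\mathbb{R}\setminus\{0\}$ satisfy, in shift notation, $$\nu(\tau\tau_{123}-\tau_3\tau_{12})+\kappa_1(\tau_2\tau_3-\tau\tau_{23})+\kappa_2(\tau\tau_{13}-\tau_1\tau_3)=0,$$ $$\kappa_2(\tau\kappa_{12}-\tau_1\nu_2)+\tau_2(\nu_1\kappa_2-\tau_3\tau_{12})+\tau_{12}(\tau\tau_{23}-\nu\nu_2)=0,$$ $$\nu(\kappa_1\nu_2-\kappa_2\nu_1)+\kappa_1(\tau_2\tau_3-\tau\tau_{23})+\kappa_2(\tau\tau_{13}-\tau_1\tau_3)=0.$$ Then the linear lattice equations for $\Phi,\Psi,\boldsymbol\chi:\mathbb{Z}^3\to\mathbb{C}$ $$\Phi_{12}-\Phi=\frac{\tau_1\tau_2}{\tau\tau_{12}}(\Phi_1-\Phi_2),\qquad \boldsymbol\chi_1-\Phi=\frac{\nu\tau_1}{\kappa_1\tau}(\Phi_1-\Psi),$$ $$\Phi_{13}-\Psi=\frac{\kappa_1\tau_3}{\nu\tau_{13}}(\boldsymbol\chi_1-\Phi_3),\qquad \boldsymbol\chi_2-\Phi=\frac{\nu\tau_2}{\kappa_2\tau}(\Phi_2-\Psi),$$ $$\Phi_{23}-\Psi=\frac{\kappa_2\tau_3}{\nu\tau_{23}}(\boldsymbol\chi_2-\Phi_3),\qquad \Psi-\boldsymbol\chi=\frac{\tau\tau_3}{\kappa\nu}(\Phi_3-\Phi)$$ are compatible, and for any solution, at every point of $\mathbb{Z}^3$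 the points $\Psi,\boldsymbol\chi_{12},\Phi_1,\Phi_2,\Phi_{13},\Phi_{23}$ and $\Psi_1,\Psi_2,\boldsymbol\chi_1,\boldsymbol\chi_2,\Phi,\Phi_3,\Phi_{12},\Phi_{123}$ form a reciprocal pair of octahedral and hexahedral figures obeying the multi-ratio relations $$M(\Phi_{23},\Phi_{13},\Psi,\Phi_1,\Phi_2,\boldsymbol\chi_{12})=M(\Phi_{123},\Phi_3,\boldsymbol\chi_1,\Phi,\Phi_{12},\Psi_2),$$ $$M(\Phi_{13},\Phi_{23},\Psi,\Phi_2,\Phi_1,\boldsymbol\chi_{12})=M(\Phi_{123},\Phi_3,\boldsymbol\chi_2,\Phi,\Phi_{12},\Psi_1),$$ $$M(\boldsymbol\chi_{12},\Phi_{23},\Phi_2,\Psi,\Phi_1,\Phi_{13})=M(\Phi_{123},\Psi_2,\boldsymbol\chi_2,\Phi,\boldsymbol\chi_1,\Psi_1).$$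
   Context: Shift notation: for $f$ on $\mathbb{Z}^3$, $f=f(n_1,n_2,n_3)$, $f_1=f(n_1+1,n_2,n_3)$, $f_{12}=f(n_1+1,n_2+1,n_3)$, etc. $M(P_1,\dots,P_6)=\frac{(P_1-P_2)(P_3-P_4)(P_5-P_6)}{(P_2-P_3)(P_4-P_5)(P_6-P_1)}$. An octahedral figure with vertices $\Psi,\boldsymbol\chi_{12},\Phi_1,\Phi_2,\Phi_{13},\Phi_{23}$ has the twelve straight edges $\Phi_1\Phi_2$, $\Psi\Phi_1$, $\Psi\Phi_2$, $\Psi\Phi_{13}$, $\Psi\Phi_{23}$, $\Phi_{13}\Phi_{23}$, $\boldsymbol\chi_{12}\Phi_{13}$, $\boldsymbol\chi_{12}\Phi_{23}$, $\boldsymbol\chi_{12}\Phi_1$, $\boldsymbol\chi_{12}\Phi_2$, $\Phi_1\Phi_{13}$, $\Phi_2\Phi_{23}$. A hexahedral figure with vertices $\Psi_1,\Psi_2,\boldsymbol\chi_1,\boldsymbol\chi_2,\Phi,\Phi_3,\Phi_{12},\Phi_{123}$ is reciprocal to it when its twelve edges $\Phi\Phi_{12}$, $\Phi\boldsymbol\chi_1$, $\Phi\boldsymbol\chi_2$, $\boldsymbol\chi_1\Phi_3$, $\boldsymbol\chi_2\Phi_3$, $\Phi_3\Phi_{123}$, $\Psi_1\Phi_{123}$, $\Psi_2\Phi_{123}$, $\Phi_{12}\Psi_1$, $\Phi_{12}\Psi_2$, $\boldsymbol\chi_1\Psi_1$, $\boldsymbol\chi_2\Psi_2$ are respectively parallel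 to the twelve edges listed for the octahedral figure. *)

From mathcomp Require Import all_boot all_algebra.
From mathcomp Require Export complex.
From mathcomp Require Export reals.
Set Implicit Arguments. Unset Strict Implicit. Unset Printing Implicit Defensive.
Import GRing.Theory Num.Theory.
Local Open Scope ring_scope.
Local Open Scope complex_scope.

Section Defs.
Variable R : realType.
Local Notation C := R[i].

Definition lattice (T : Type) := int -> int -> int -> T.

Definition tau_system (tau kappa nu : lattice R) : Prop :=
  forall n1 n2 n3 : int,
  let t   := tau n1 n2 n3 in
  let t1  := tau (n1+1) n2 n3 in
  let t2  := tau n1 (n2+1) n3 in
  let t3  := tau n1 n2 (n3+1) in
  let t12 := tau (n1+1) (n2+1) n3 in
  let t13 := tau (n1+1) n2 (n3+1) in
  let t23 := tau n1 (n2+1) (n3+1) in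
  let t123 := tau (n1+1) (n2+1) (n3+1) in
  let k1  := kappa (n1+1) n2 n3 in
  let k2  := kappa n1 (n2+1) n3 in
  let k12 := kappa (n1+1) (n2+1) n3 in
  let v   := nu n1 n2 n3 in
  let v1  := nu (n1+1) n2 n3 in
  let v2  := nu n1 (n2+1) n3 in
  [/\ v * (t * t123 - t3 * t12) + k1 * (t2 * t3 - t * t23) + k2 * (t * t13 - t1 * t3) = 0,
      k2 * (t * k12 - t1 * v2) + t2 * (v1 * k2 - t3 * t12) + t12 * (t * t23 - v * v2) = 0
    & v * (k1 * v2 - k2 * v1) + k1 * (t2 * t3 - t * t23) + k2 * (t * t13 - t1 * t3) = 0].

Definition lin_eqs_at (tau kappa nu : lattice R) (Phi Psi chi : lattice C)
    (n1 n2 n3 : int) : Prop :=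
  let t   := tau n1 n2 n3 in
  let t1  := tau (n1+1) n2 n3 in
  let t2  := tau n1 (n2+1) n3 in
  let t3  := tau n1 n2 (n3+1) in
  let t12 := tau (n1+1) (n2+1) n3 in
  let t13 := tau (n1+1) n2 (n3+1) in
  let t23 := tau n1 (n2+1) (n3+1) in
  let k   := kappa n1 n2 n3 in
  let k1  := kappa (n1+1) n2 n3 in
  let k2  := kappa n1 (n2+1) n3 in
  let v   := nu n1 n2 n3 in
  let F   := Phi n1 n2 n3 in
  let F1  := Phi (n1+1) n2 n3 in
  let F2  := Phi n1 (n2+1) n3 in
  let F3  := Phi n1 n2 (n3+1) in
  let F12 := Phi (n1+1) (n2+1) n3 in
  let F13 := Phi (n1+1) n2 (n3+1) in
  let F23 := Phi n1 (n2+1) (n3+1) in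
  let P   := Psi n1 n2 n3 in
  let X   := chi n1 n2 n3 in
  let X1  := chi (n1+1) n2 n3 in
  let X2  := chi n1 (n2+1) n3 in
  F12 - F = ((t1 * t2) / (t * t12))%:C * (F1 - F2) /\
      X1 - F = ((v * t1) / (k1 * t))%:C * (F1 - P) /\
      F13 - P = ((k1 * t3) / (v * t13))%:C * (X1 - F3) /\
      X2 - F = ((v * t2) / (k2 * t))%:C * (F2 - P) /\
      F23 - P = ((k2 * t3) / (v * t23))%:C * (X2 - F3) /\
      P - X = ((t * t3) / (k * v))%:C * (F3 - F).

(* Compatibility (consistency around the elementary cube): starting from
   arbitrary values of Phi, Phi_1, Phi_2, Phi_3, chi at a point, the system
   imposed at n, n+e1, n+e2, n+e3 (which computes chi_12 in two ways and
   Phi_123 in three ways) always admits a solution. *)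
Definition compatible (tau kappa nu : lattice R) : Prop :=
  forall (n1 n2 n3 : int) (a a1 a2 a3 x : C),
  exists (Phi Psi chi : lattice C),
    [/\ Phi n1 n2 n3 = a, Phi (n1+1) n2 n3 = a1, Phi n1 (n2+1) n3 = a2,
        Phi n1 n2 (n3+1) = a3 & chi n1 n2 n3 = x] /\
    [/\ lin_eqs_at tau kappa nu Phi Psi chi n1 n2 n3,
        lin_eqs_at tau kappa nu Phi Psi chi (n1+1) n2 n3,
        lin_eqs_at tau kappa nu Phi Psi chi n1 (n2+1) n3
      & lin_eqs_at tau kappa nu Phi Psi chi n1 n2 (n3+1)].

Definition multiratio (P1 P2 P3 P4 P5 P6 : C) : C :=
  ((P1 - P2) * (P3 - P4) * (P5 - P6)) / ((P2 - P3) * (P4 - P5) * (P6 - P1)).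

Definition parallel (u v : C) : Prop := Im (u * v^*) = 0.

Definition reciprocal (oP oX12 oF1 oF2 oF13 oF23 : C)
    (hP1 hP2 hX1 hX2 hF hF3 hF12 hF123 : C) : Prop :=
  parallel (hF12 - hF) (oF2 - oF1) /\
      parallel (hX1 - hF) (oF1 - oP) /\
      parallel (hX2 - hF) (oF2 - oP) /\
      parallel (hF3 - hX1) (oF13 - oP) /\
      parallel (hF3 - hX2) (oF23 - oP) /\
      parallel (hF123 - hF3) (oF23 - oF13) /\
      parallel (hF123 - hP1) (oF13 - oX12) /\
      parallel (hF123 - hP2) (oF23 - oX12) /\
      parallel (hP1 - hF12) (oF1 - oX12) /\
      parallel (hP2 - hF12) (oF2 - oX12) /\
      parallel (hP1 - hX1) (oF1 - oF13) /\
      parallel (hP2 - hX2) (oF2 - oF23).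

End Defs.

(** The six linear equations say that every edge of the hexahedral figure is a
    real multiple of the corresponding edge of the octahedral figure.  This
    gives the reciprocity, and it makes each multi-ratio of the hexahedron the
    multi-ratio of the octahedron times a product of six real factors, which
    cancels to 1 identically; so the figures only need [tau], [kappa] and [nu]
    to be nonzero.  For compatibility, the equations compute all values around
    the elementary cube from [Phi], [Phi_1], [Phi_2], [Phi_3] and [chi] at a
    point; [chi_12] is computed twice and [Phi_123] three times, and the three
    consistency conditions become rational identities once the nonlinear
    system is solved for [tau_123], [kappa_12] and [tau_13]. *)

From mathcomp Require Import all_boot all_algebra.
From mathcomp Require Import complex reals.
From mathcomp Require Import ring.

Set Implicit Arguments.
Unset Strict Implicit.
Unset Printing Implicit Defensive.

Import GRing.Theory Num.Theory.
Local Open Scope ring_scope.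
Local Open Scope complex_scope.

Section Plane.
Variable R : realType.
Implicit Types (r : R) (u w x y a b : R[i]).

Lemma parallelE u w : parallel u w <-> u * w^* \is Num.real.
Proof. exact: rwP (Creal_ImP _). Qed.

Lemma parallel_sym u w : parallel u w -> parallel w u.
Proof.
rewrite !parallelE => uw_real.
by rewrite -[w * _]conjCK rmorphM /= conjCK mulrC conj_Creal.
Qed.

Lemma parallel_scaled r u w : u = r%:C * w -> parallel u w.
Proof.
move->; rewrite parallelE -mulrA rpredM //; last exact/ger0_real/mul_conjC_ge0.
by apply/complex_realP; exists r.
Qed.

Lemma scaled_subNr r x y a b : x - y = r%:C * (a - b) -> x - y = (- r)%:C * (b - a).
Proof. by move->; rewrite rmorphN /= mulNr -mulrN opprB. Qed.

Lemma scaled_subNl r x y a b : x - y = r%:C * (a - b) -> y - x = (- r)%:C * (a - b).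
Proof. by move=> xy; rewrite -opprB xy rmorphN /= mulNr. Qed.

Lemma scaled_subV r x y a b : r != 0 -> x - y = r%:C * (a - b) -> a - b = r^-1%:C * (x - y).
Proof. by move=> r0 ->; rewrite mulrA -rmorphM /= mulVf // mul1r. Qed.

Lemma multiratio_scaled (p1 p2 p3 p4 p5 p6 q1 q2 q3 q4 q5 q6 r1 r2 r3 r4 r5 r6 : R[i]) :
  q1 - q2 = r1 * (p1 - p2) -> q3 - q4 = r2 * (p3 - p4) -> q5 - q6 = r3 * (p5 - p6) ->
  q2 - q3 = r4 * (p2 - p3) -> q4 - q5 = r5 * (p4 - p5) -> q6 - q1 = r6 * (p6 - p1) ->
  multiratio q1 q2 q3 q4 q5 q6
    = (r1 * r2 * r3) / (r4 * r5 * r6) * multiratio p1 p2 p3 p4 p5 p6.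
Proof.
have mulr3 (c1 c2 c3 z1 z2 z3 : R[i]) :
    c1 * z1 * (c2 * z2) * (c3 * z3) = c1 * c2 * c3 * (z1 * z2 * z3) by ring.
rewrite /multiratio => -> -> -> -> -> ->.
by rewrite !mulr3 invfM mulrACA.
Qed.

End Plane.

Lemma addrKl (V : zmodType) (x y : V) : x + y - x = y.
Proof. by rewrite addrC addKr. Qed.

Lemma int_offsets (z : int) : (z - z = 0%N) * (z + 1 - z = 1%N) * (z + 1 + 1 - z = 2%N).
Proof. by split; [split|]; rewrite ?subrr ?addrKl // -[z + 1 + 1]addrA addrKl. Qed.

Definition from_offsets (T : Type) (d : T) (n1 n2 n3 : int) (f : nat -> nat -> nat -> T)
    : lattice T :=
  fun m1 m2 m3 => match m1 - n1, m2 - n2, m3 - n3 with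
                  | Posz i, Posz j, Posz l => f i j l
                  | _, _, _ => d
                  end.

Section Cube.
Variables (R : realType) (tau kappa nu : lattice R).
Hypothesis nonzero : forall n1 n2 n3 : int,
  [/\ tau n1 n2 n3 != 0, kappa n1 n2 n3 != 0 & nu n1 n2 n3 != 0].

Let tau_neq0 n1 n2 n3 : tau n1 n2 n3 != 0. Proof. by case: (nonzero n1 n2 n3). Qed.
Let kappa_neq0 n1 n2 n3 : kappa n1 n2 n3 != 0. Proof. by case: (nonzero n1 n2 n3). Qed.
Let nu_neq0 n1 n2 n3 : nu n1 n2 n3 != 0. Proof. by case: (nonzero n1 n2 n3). Qed.
Local Hint Resolve tau_neq0 kappa_neq0 nu_neq0 : core.

Let ratio_neq0 (a b c d : R) : a != 0 -> b != 0 -> c != 0 -> d != 0 -> a * b / (c * d) != 0.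
Proof. by move=> *; rewrite !mulf_neq0 ?invr_neq0 ?mulf_neq0. Qed.

Variables n1 n2 n3 : int.
Local Notation t := (tau n1 n2 n3).
Local Notation t1 := (tau (n1 + 1) n2 n3).
Local Notation t2 := (tau n1 (n2 + 1) n3).
Local Notation t3 := (tau n1 n2 (n3 + 1)).
Local Notation t12 := (tau (n1 + 1) (n2 + 1) n3).
Local Notation t13 := (tau (n1 + 1) n2 (n3 + 1)).
Local Notation t23 := (tau n1 (n2 + 1) (n3 + 1)).
Local Notation t123 := (tau (n1 + 1) (n2 + 1) (n3 + 1)).
Local Notation k1 := (kappa (n1 + 1) n2 n3).
Local Notation k2 := (kappa n1 (n2 + 1) n3).
Local Notation k12 := (kappa (n1 + 1) (n2 + 1) n3).
Local Notation v := (nu n1 n2 n3).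
Local Notation v1 := (nu (n1 + 1) n2 n3).
Local Notation v2 := (nu n1 (n2 + 1) n3).

Section Figures.
Variables Phi Psi chi : lattice R[i].
Hypothesis lin : forall m1 m2 m3 : int, lin_eqs_at tau kappa nu Phi Psi chi m1 m2 m3.

Local Notation F := (Phi n1 n2 n3).
Local Notation F1 := (Phi (n1 + 1) n2 n3).
Local Notation F2 := (Phi n1 (n2 + 1) n3).
Local Notation F3 := (Phi n1 n2 (n3 + 1)).
Local Notation F12 := (Phi (n1 + 1) (n2 + 1) n3).
Local Notation F13 := (Phi (n1 + 1) n2 (n3 + 1)).
Local Notation F23 := (Phi n1 (n2 + 1) (n3 + 1)).
Local Notation F123 := (Phi (n1 + 1) (n2 + 1) (n3 + 1)).
Local Notation P := (Psi n1 n2 n3).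
Local Notation P1 := (Psi (n1 + 1) n2 n3).
Local Notation P2 := (Psi n1 (n2 + 1) n3).
Local Notation X1 := (chi (n1 + 1) n2 n3).
Local Notation X2 := (chi n1 (n2 + 1) n3).
Local Notation X12 := (chi (n1 + 1) (n2 + 1) n3).

Lemma reciprocal_cube : reciprocal P X12 F1 F2 F13 F23 P1 P2 X1 X2 F F3 F12 F123.
Proof.
have [A1 [A2 [A3 [A4 [A5 _]]]]] := lin n1 n2 n3.
have [_ [_ [_ [B4 [B5 B6]]]]] := lin (n1 + 1) n2 n3.
have [_ [C2 [C3 [_ [_ C6]]]]] := lin n1 (n2 + 1) n3.
have [D1 _] := lin n1 n2 (n3 + 1).
do !split.
- exact: parallel_scaled (scaled_subNr A1).
- exact: parallel_scaled A2.
- exact: parallel_scaled A4.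
- exact: parallel_sym (parallel_scaled (scaled_subNr A3)).
- exact: parallel_sym (parallel_scaled (scaled_subNr A5)).
- exact: parallel_scaled (scaled_subNr D1).
- exact: parallel_scaled (scaled_subNr B5).
- exact: parallel_scaled (scaled_subNr C3).
- exact: parallel_sym (parallel_scaled (scaled_subNr (scaled_subNl B4))).
- exact: parallel_sym (parallel_scaled (scaled_subNr (scaled_subNl C2))).
- exact: parallel_scaled (scaled_subNr B6).
- exact: parallel_scaled (scaled_subNr C6).
Qed.

Lemma multiratio_cube1 : multiratio F23 F13 P F1 F2 X12 = multiratio F123 F3 X1 F F12 P2.
Proof.
have [A1 [A2 [A3 _]]] := lin n1 n2 n3.
have [_ [C2 [C3 _]]] := lin n1 (n2 + 1) n3.
have [D1 _] := lin n1 n2 (n3 + 1).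
rewrite [RHS](multiratio_scaled (scaled_subNr D1) (scaled_subNr A2)
  (scaled_subNr (scaled_subV _ C2)) (scaled_subNl (scaled_subV _ A3))
  (scaled_subNl A1) (scaled_subNl C3)); [|exact: ratio_neq0..].
rewrite -[LHS]mul1r; congr (_ * _).
by field; rewrite ?fmorph_eq0 ?tau_neq0 ?kappa_neq0 ?nu_neq0.
Qed.

Lemma multiratio_cube2 : multiratio F13 F23 P F2 F1 X12 = multiratio F123 F3 X2 F F12 P1.
Proof.
have [A1 [_ [_ [A4 [A5 _]]]]] := lin n1 n2 n3.
have [_ [_ [_ [B4 [B5 _]]]]] := lin (n1 + 1) n2 n3.
have [D1 _] := lin n1 n2 (n3 + 1).
rewrite [RHS](multiratio_scaled D1 (scaled_subNr A4)
  (scaled_subNr (scaled_subV _ B4)) (scaled_subNl (scaled_subV _ A5))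
  (scaled_subNl (scaled_subNr A1)) (scaled_subNl B5)); [|exact: ratio_neq0..].
rewrite -[LHS]mul1r; congr (_ * _).
by field; rewrite ?fmorph_eq0 ?tau_neq0 ?kappa_neq0 ?nu_neq0.
Qed.

Lemma multiratio_cube3 : multiratio X12 F23 F2 P F1 F13 = multiratio F123 P2 X2 F X1 P1.
Proof.
have [_ [A2 [_ [A4 _]]]] := lin n1 n2 n3.
have [_ [_ [_ [_ [B5 B6]]]]] := lin (n1 + 1) n2 n3.
have [_ [_ [C3 [_ [_ C6]]]]] := lin n1 (n2 + 1) n3.
rewrite [RHS](multiratio_scaled C3 A4 (scaled_subNl (scaled_subNr B6)) C6
  (scaled_subNl (scaled_subNr A2)) (scaled_subNl (scaled_subNr B5))).
rewrite -[LHS]mul1r; congr (_ * _).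
by field; rewrite ?fmorph_eq0 ?tau_neq0 ?kappa_neq0 ?nu_neq0.
Qed.

End Figures.

Section Compatibility.
Hypothesis system : tau_system tau kappa nu.

Let t123E : t123 = (t3 * t12 + k1 * v2 - k2 * v1) / t.
Proof.
have [E1 _ E3] := system n1 n2 n3.
apply/(canRL (mulfK _)) => //; apply: (mulfI (nu_neq0 n1 n2 n3)).
by apply/eqP; rewrite -subr_eq0 -(subrr 0) -{1}E1 -E3; apply/eqP; ring.
Qed.

Let k12E : k12 = (k2 * t1 * v2 - t2 * (v1 * k2 - t3 * t12) - t12 * (t * t23 - v * v2)) / (k2 * t).
Proof.
have [_ E2 _] := system n1 n2 n3.
apply/(canRL (mulfK _)); first by rewrite mulf_neq0.
by apply/eqP; rewrite -subr_eq0 -E2; apply/eqP; ring.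
Qed.

Let t13E : t13 = (k2 * t1 * t3 - v * (k1 * v2 - k2 * v1) - k1 * (t2 * t3 - t * t23)) / (k2 * t).
Proof.
have [_ _ E3] := system n1 n2 n3.
apply/(canRL (mulfK _)); first by rewrite mulf_neq0.
by apply/eqP; rewrite -subr_eq0 -E3; apply/eqP; ring.
Qed.

Variables a a1 a2 a3 x : R[i].

Let coef12 m1 m2 m3 :=
  ((tau (m1 + 1) m2 m3 * tau m1 (m2 + 1) m3) / (tau m1 m2 m3 * tau (m1 + 1) (m2 + 1) m3))%:C.
Let coefX1 m1 m2 m3 :=
  ((nu m1 m2 m3 * tau (m1 + 1) m2 m3) / (kappa (m1 + 1) m2 m3 * tau m1 m2 m3))%:C.
Let coef13 m1 m2 m3 :=
  ((kappa (m1 + 1) m2 m3 * tau m1 m2 (m3 + 1)) / (nu m1 m2 m3 * tau (m1 + 1) m2 (m3 + 1)))%:C.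
Let coefX2 m1 m2 m3 :=
  ((nu m1 m2 m3 * tau m1 (m2 + 1) m3) / (kappa m1 (m2 + 1) m3 * tau m1 m2 m3))%:C.
Let coef23 m1 m2 m3 :=
  ((kappa m1 (m2 + 1) m3 * tau m1 m2 (m3 + 1)) / (nu m1 m2 m3 * tau m1 (m2 + 1) (m3 + 1)))%:C.
Let coefP m1 m2 m3 :=
  ((tau m1 m2 m3 * tau m1 m2 (m3 + 1)) / (kappa m1 m2 m3 * nu m1 m2 m3))%:C.

Let P := x + coefP n1 n2 n3 * (a3 - a).
Let X1 := a + coefX1 n1 n2 n3 * (a1 - P).
Let X2 := a + coefX2 n1 n2 n3 * (a2 - P).
Let F12 := a + coef12 n1 n2 n3 * (a1 - a2).
Let F13 := P + coef13 n1 n2 n3 * (X1 - a3).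
Let F23 := P + coef23 n1 n2 n3 * (X2 - a3).
Let P1 := X1 + coefP (n1 + 1) n2 n3 * (F13 - a1).
Let P2 := X2 + coefP n1 (n2 + 1) n3 * (F23 - a2).
Let X12 := a1 + coefX2 (n1 + 1) n2 n3 * (F12 - P1).
Let F123 := P1 + coef23 (n1 + 1) n2 n3 * (X12 - F13).

Let cube_closure :
  [/\ X12 - a2 = coefX1 n1 (n2 + 1) n3 * (F12 - P2),
      F123 - P2 = coef13 n1 (n2 + 1) n3 * (X12 - F23)
    & F123 - a3 = coef12 n1 n2 (n3 + 1) * (F13 - F23)].
Proof.
have t123_num : t3 * t12 + k1 * v2 - k2 * v1 != 0.
  by move: (tau_neq0 (n1 + 1) (n2 + 1) (n3 + 1)); rewrite t123E mulf_eq0 negb_or => /andP[].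
have k12_num : k2 * t1 * v2 - t2 * (v1 * k2 - t3 * t12) - t12 * (t * t23 - v * v2) != 0.
  by move: (kappa_neq0 (n1 + 1) (n2 + 1) n3); rewrite k12E mulf_eq0 negb_or => /andP[].
have t13_num : k2 * t1 * t3 - v * (k1 * v2 - k2 * v1) - k1 * (t2 * t3 - t * t23) != 0.
  by move: (tau_neq0 (n1 + 1) n2 (n3 + 1)); rewrite t13E mulf_eq0 negb_or => /andP[].
rewrite /F123 /X12 /P1 /P2 /F12 /F13 /F23 /X1 /X2 /P.
rewrite /coef12 /coefX1 /coef13 /coefX2 /coef23 /coefP t123E k12E t13E.
by split; field; rewrite -?(rmorphM, rmorphB, rmorphD) ?fmorph_eq0
  ?tau_neq0 ?kappa_neq0 ?nu_neq0 ?t123_num ?k12_num ?t13_num.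
Qed.

(* The values beyond the unit cube that the equations at n + e_i involve;
   Phi at n + 2 e_i and chi at n + e_3 are free and taken to be 0. *)
Let X11 := a1 + coefX1 (n1 + 1) n2 n3 * (0 - P1).
Let X22 := a2 + coefX2 n1 (n2 + 1) n3 * (0 - P2).
Let P3 := 0 + coefP n1 n2 (n3 + 1) * (0 - a3).
Let X13 := a3 + coefX1 n1 n2 (n3 + 1) * (F13 - P3).
Let X23 := a3 + coefX2 n1 n2 (n3 + 1) * (F23 - P3).
Let F112 := a1 + coef12 (n1 + 1) n2 n3 * (0 - F12).
Let F113 := P1 + coef13 (n1 + 1) n2 n3 * (X11 - F13).
Let F122 := a2 + coef12 n1 (n2 + 1) n3 * (F12 - 0).
Let F223 := P2 + coef23 n1 (n2 + 1) n3 * (X22 - F23).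
Let F133 := P3 + coef13 n1 n2 (n3 + 1) * (X13 - 0).
Let F233 := P3 + coef23 n1 n2 (n3 + 1) * (X23 - 0).

Lemma cube_compatible : exists Phi Psi chi : lattice R[i],
  [/\ Phi n1 n2 n3 = a, Phi (n1 + 1) n2 n3 = a1, Phi n1 (n2 + 1) n3 = a2,
      Phi n1 n2 (n3 + 1) = a3 & chi n1 n2 n3 = x] /\
  [/\ lin_eqs_at tau kappa nu Phi Psi chi n1 n2 n3,
      lin_eqs_at tau kappa nu Phi Psi chi (n1 + 1) n2 n3,
      lin_eqs_at tau kappa nu Phi Psi chi n1 (n2 + 1) n3
    & lin_eqs_at tau kappa nu Phi Psi chi n1 n2 (n3 + 1)].
Proof.
exists (from_offsets 0 n1 n2 n3 (fun i j l => match i, j, l with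
  | 0, 0, 0 => a | 1, 0, 0 => a1 | 0, 1, 0 => a2 | 0, 0, 1 => a3
  | 1, 1, 0 => F12 | 1, 0, 1 => F13 | 0, 1, 1 => F23 | 1, 1, 1 => F123
  | 2, 1, 0 => F112 | 2, 0, 1 => F113 | 1, 2, 0 => F122 | 0, 2, 1 => F223
  | 1, 0, 2 => F133 | 0, 1, 2 => F233 | _, _, _ => 0%R end)%N).
exists (from_offsets 0 n1 n2 n3 (fun i j l => match i, j, l with
  | 0, 0, 0 => P | 1, 0, 0 => P1 | 0, 1, 0 => P2 | 0, 0, 1 => P3 | _, _, _ => 0%R end)%N).
exists (from_offsets 0 n1 n2 n3 (fun i j l => match i, j, l with
  | 0, 0, 0 => x | 1, 0, 0 => X1 | 0, 1, 0 => X2 | 1, 1, 0 => X12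
  | 2, 0, 0 => X11 | 0, 2, 0 => X22 | 1, 0, 1 => X13 | 0, 1, 1 => X23
  | _, _, _ => 0%R end)%N).
rewrite /lin_eqs_at /from_offsets; cbv zeta; rewrite !int_offsets; cbv beta iota.
have [K1 K2 K3] := cube_closure.
by split=> //; do ![split | exact: addrKl].
Qed.

End Compatibility.
End Cube.

Theorem theorem9 (R : realType) (tau kappa nu : lattice R) :
  (forall n1 n2 n3 : int,
     [/\ tau n1 n2 n3 != 0, kappa n1 n2 n3 != 0 & nu n1 n2 n3 != 0]) ->
  tau_system tau kappa nu ->
  compatible tau kappa nu /\
  (forall Phi Psi chi : lattice R[i],
     (forall n1 n2 n3 : int, lin_eqs_at tau kappa nu Phi Psi chi n1 n2 n3) ->
     forall n1 n2 n3 : int,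
     let F    := Phi n1 n2 n3 in
     let F1   := Phi (n1+1) n2 n3 in
     let F2   := Phi n1 (n2+1) n3 in
     let F3   := Phi n1 n2 (n3+1) in
     let F12  := Phi (n1+1) (n2+1) n3 in
     let F13  := Phi (n1+1) n2 (n3+1) in
     let F23  := Phi n1 (n2+1) (n3+1) in
     let F123 := Phi (n1+1) (n2+1) (n3+1) in
     let P    := Psi n1 n2 n3 in
     let P1   := Psi (n1+1) n2 n3 in
     let P2   := Psi n1 (n2+1) n3 in
     let X1   := chi (n1+1) n2 n3 in
     let X2   := chi n1 (n2+1) n3 in
     let X12  := chi (n1+1) (n2+1) n3 in
     [/\ reciprocal P X12 F1 F2 F13 F23 P1 P2 X1 X2 F F3 F12 F123,
         multiratio F23 F13 P F1 F2 X12 = multiratio F123 F3 X1 F F12 P2,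
         multiratio F13 F23 P F2 F1 X12 = multiratio F123 F3 X2 F F12 P1
       & multiratio X12 F23 F2 P F1 F13 = multiratio F123 P2 X2 F X1 P1]).
Proof.
move=> nonzero system.
split=> [n1 n2 n3 a a1 a2 a3 x | Phi Psi chi lin n1 n2 n3]; first exact: cube_compatible.
cbv zeta; split.
- exact: reciprocal_cube.
- exact: multiratio_cube1.
- exact: multiratio_cube2.
- exact: multiratio_cube3.
Qed.
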